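(* Let $F\subsetneq K$ be fields of characteristic $0$, with $F$ a proper nonempty subfield of $K$. Let $p(x)=\sum_{k=0}^{n}a_k x^k\in K[x]$ with $a_n\neq 0$, and let $q(x)=\sum_{j=0}^{m}b_j x^j\in F[x]$ with $b_m\neq 0$. Then $D_F(p\circ q)=D_F(p)\,D_F(q)$.
   Context: For sets $F\subset K$ and $p(x)=\sum_{k=0}^{n}a_kx^k\in K[x]$ with $a_n\neq 0$, the $F$ deficit $D_F(p)$ is defined as follows: if $p\in K[x]\setminus F[x]$, then $D_F(p)=n-\max\{0\le k\le n: a_k\notin F\}$; if $p\in F[x]$, then $D_F(p)=n$. Here $F[x]$ denotes the set of polynomials with all coefficients in $F$. *)

From mathcomp Require Import all_boot all_order all_algebra.
Set Implicit Arguments. Unset Strict Implicit. Unset Printing Implicit Defensive.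
Import GRing.Theory.
Local Open Scope ring_scope.

(* F-deficit D_F(p) of a polynomial p in K[x], for F a subset of K.
   n = deg p = (size p).-1.  If p is in F[x], D_F(p) = n; otherwise
   D_F(p) = n - max { k <= n | p_k \notin F }.
   (For p = 0, which is outside the paper's domain, this gives 0.) *)
Definition deficit (K : nzRingType) (F : {pred K}) (p : {poly K}) : nat :=
  if p \is a polyOver F then (size p).-1
  else subn (size p).-1 (\max_(k < size p | p`_k \notin F) (k : nat)).

From mathcomp Require Import all_boot all_order all_algebra.
Set Implicit Arguments. Unset Strict Implicit. Unset Printing Implicit Defensive.
Import GRing.Theory.
Local Open Scope ring_scope.

(* Let k be the index of the highest coefficient of p outside F and d = deg q.
   Split p = p_lo + p_hi, where p_lo keeps the coefficients of index <= k and
   p_hi lies in F[x].  Then p_hi \Po q lies in F[x], p_lo \Po q has degree k d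
   and leading coefficient p_k (lead q)^k, which is outside F because lead q
   is a nonzero element of the field F.  Hence k d is the highest index of a
   coefficient of p \Po q outside F, and
   D_F(p \Po q) = n d - k d = (n - k) d = D_F(p) D_F(q).
   Neither the characteristic nor the properness of F plays any role. *)

Section Deficit.
Variables (K : nzRingType) (F : addrClosed K).

Lemma deficit_polyOver (r : {poly K}) :
  r \is a polyOver F -> deficit F r = (size r).-1.
Proof. by rewrite /deficit => ->. Qed.

Lemma deficit_size_le1 (r : {poly K}) : (size r <= 1)%N -> deficit F r = 0%N.
Proof. by rewrite /deficit; case: (size r) => [|[]] //; case: ifP. Qed.

Lemma coef_notin_size (r : {poly K}) k : r`_k \notin F -> (k < size r)%N.
Proof. by apply: contraR; rewrite -leqNgt => /(nth_default 0) ->; exact: rpred0. Qed.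

Lemma deficit_top_notin (r : {poly K}) k :
  r`_k \notin F -> (forall i, (k < i)%N -> r`_i \in F) ->
  deficit F r = ((size r).-1 - k)%N.
Proof.
move=> rk_notin r_above; rewrite /deficit.
have -> : (r \is a polyOver F) = false.
  by apply: contraNF rk_notin => /polyOverP.
congr (_ - _)%N; apply/eqP; rewrite eqn_leq; apply/andP; split.
  apply/bigmax_leqP => i ri_notin; rewrite leqNgt.
  by apply: contra ri_notin => /r_above ->.
have k_lt := coef_notin_size rk_notin.
exact: (@leq_bigmax_cond _ _ (fun i : 'I_(size r) => i : nat) (Ordinal k_lt)).
Qed.

Lemma top_coef_notin (r : {poly K}) : r \isn't a polyOver F ->
  exists2 k, r`_k \notin F & forall i, (k < i)%N -> r`_i \in F.
Proof.
move=> r_notF.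
have ex_notin : exists i, r`_i \notin F.
  have /(has_nthP 0)[i _ ri_notin] : has (predC (mem F)) r by rewrite has_predC.
  by exists i.
have notin_le i : r`_i \notin F -> (i <= size r)%N.
  by move/coef_notin_size/ltnW.
have [k rk_notin k_max] := ex_maxnP ex_notin notin_le.
exists k => // i; apply: contraTT; rewrite -leqNgt; exact: k_max.
Qed.

End Deficit.
Section CompositionTopCoef.
Variables (K : fieldType) (F : divringClosed K) (p q : {poly K}) (k : nat).
Hypotheses (qF : q \is a polyOver F) (q_nonconst : (1 < size q)%N).
Hypotheses (pk_notin : p`_k \notin F) (p_above : forall i, (k < i)%N -> p`_i \in F).

Let p_lo := take_poly k.+1 p.

Let size_p_lo : size p_lo = k.+1.
Proof.
apply/anti_leq; rewrite size_take_poly; apply: (coef_notin_size (F := F)).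
by rewrite coef_take_poly ltnSn.
Qed.

Let comp_p_hi_polyOver : (p - p_lo) \Po q \is a polyOver F.
Proof.
apply: polyOver_comp qF; apply/polyOverP => i.
rewrite coefB coef_take_poly ltnS; case: leqP => [_|/p_above pi_in].
  by rewrite subrr rpred0.
by rewrite subr0.
Qed.

Let coef_comp_split i : (p \Po q)`_i = (p_lo \Po q)`_i + ((p - p_lo) \Po q)`_i.
Proof. by rewrite -coefD -comp_polyD addrC subrK. Qed.

Lemma comp_coef_top_notin : (p \Po q)`_(k * (size q).-1) \notin F.
Proof.
rewrite coef_comp_split rpredDr //; last exact/polyOverP.
have -> : (p_lo \Po q)`_(k * (size q).-1) = lead_coef (p_lo \Po q).
  by rewrite lead_coefE size_comp_poly size_p_lo.
have lead_q_in : lead_coef q \in F by exact/polyOverP.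
have lead_q_unit : lead_coef q ^+ k \is a GRing.unit.
  by rewrite unitfE expf_neq0 // lead_coef_eq0 -size_poly_gt0 ltnW.
rewrite lead_coef_comp // size_p_lo lead_coefE size_p_lo coef_take_poly ltnSn.
by rewrite rpredMr // rpredX.
Qed.

Lemma comp_coef_above_in i : (k * (size q).-1 < i)%N -> (p \Po q)`_i \in F.
Proof.
move=> i_gt; rewrite coef_comp_split nth_default ?add0r; first exact/polyOverP.
by apply: leq_trans (size_comp_poly_leq _ _) _; rewrite size_p_lo.
Qed.

End CompositionTopCoef.

Theorem theorem5 (K : fieldType) (F : divringClosed K)
    (charK0 : [pchar K] =i pred0)
    (Fproper : exists x : K, x \notin F)
    (p q : {poly K}) (p_nz : p != 0) (q_nz : q != 0)
    (qF : q \is a polyOver F) :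
  deficit F (p \Po q) = (deficit F p * deficit F q)%N.
Proof.
rewrite (deficit_polyOver qF).
have [q_const | q_nonconst] := leqP (size q) 1.
  have deg_q0 : (size q).-1 = 0%N by case: (size q) q_const => [|[]].
  rewrite deg_q0 muln0 deficit_size_le1 //.
  by apply: leq_trans (size_comp_poly_leq _ _) _; rewrite deg_q0 muln0.
have [pF | /top_coef_notin[k pk_notin p_above]] := boolP (p \is a polyOver F).
  by rewrite !deficit_polyOver ?polyOver_comp // size_comp_poly.
rewrite (deficit_top_notin (comp_coef_top_notin qF q_nonconst pk_notin p_above)).
  by rewrite size_comp_poly (deficit_top_notin pk_notin p_above) mulnBl.
exact: comp_coef_above_in.
Qed.
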